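(* Let $\epsilon,\gamma,\mu,\nu\in\mathbb R$, $\mathbf a=[\epsilon\ \gamma]^T$, $\mathbf b=[\mu\ \nu]^T$, let $\boldsymbol\psi:\mathbb R\to\mathbb R^2$, $|\boldsymbol\psi|=\|\boldsymbol\psi(x)\|_2$, and $$\mathbf M(x)=\mathbf N_1|\boldsymbol\psi|^2+\mathbf N_2|\boldsymbol\psi|^4+(2\mathbf N_1+4\mathbf N_2|\boldsymbol\psi|^2)\boldsymbol\psi\boldsymbol\psi^T,\quad \mathbf N_1=\begin{bmatrix}\epsilon&-\gamma\\ \gamma&\epsilon\end{bmatrix},\ \mathbf N_2=\begin{bmatrix}\mu&-\nu\\ \nu&\mu\end{bmatrix}.$$ Suppose that (1) $|\boldsymbol\psi(x)|>0$ for all $x\in\mathbb R$; (2) $\mathbf a$ and $\mathbf b$ are not both $\mathbf 0$; and (3) if $\mathbf a\neq\mathbf 0$, $\mathbf b\neq\mathbf 0$ and $$r_-:=\frac{-4(\epsilon\mu+\gamma\nu)-\sqrt{16(\epsilon\mu+\gamma\nu)^2-15(\epsilon^2+\gamma^2)(\mu^2+\nu^2)}}{5(\mu^2+\nu^2)}$$ is real and positive, then $\max_{x\in\mathbb R}|\boldsymbol\psi(x)|^2<r_-$. Then $\det(\mathbf M(x))>0$ for all $x\in\mathbb R$. *)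

From HB Require Import structures.
From mathcomp Require Import all_boot all_order all_algebra.
From mathcomp Require Import reals.
Set Implicit Arguments. Unset Strict Implicit. Unset Printing Implicit Defensive.
Import Order.TTheory GRing.Theory Num.Theory.
Local Open Scope ring_scope.

Definition mat2 {R : ringType} (a b c d : R) : 'M[R]_2 :=
  \matrix_(i < 2, j < 2)
    if i == 0 then (if j == 0 then a else b) else (if j == 0 then c else d).

Definition vec2 {R : ringType} (x y : R) : 'cV[R]_2 :=
  \col_(i < 2) (if i == 0 then x else y).

Definition norm2 {R : realType} (v : 'cV[R]_2) : R :=
  Num.sqrt (\sum_(i < 2) v i 0 ^+ 2).

Definition N1 {R : ringType} (eps gam : R) : 'M[R]_2 := mat2 eps (- gam) gam eps.
Definition N2 {R : ringType} (mu nu : R) : 'M[R]_2 := mat2 mu (- nu) nu mu.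

Definition Mmat {R : realType} (eps gam mu nu : R) (psi : R -> 'cV[R]_2) (x : R)
  : 'M[R]_2 :=
  let p := norm2 (psi x) in
  (p ^+ 2) *: N1 eps gam + (p ^+ 4) *: N2 mu nu
  + (2%:R *: N1 eps gam + (4%:R * p ^+ 2) *: N2 mu nu) *m (psi x *m (psi x)^T).

Definition disc {R : realType} (eps gam mu nu : R) : R :=
  16%:R * (eps * mu + gam * nu) ^+ 2
  - 15%:R * (eps ^+ 2 + gam ^+ 2) * (mu ^+ 2 + nu ^+ 2).

Definition r_minus {R : realType} (eps gam mu nu : R) : R :=
  (- (4%:R * (eps * mu + gam * nu)) - Num.sqrt (disc eps gam mu nu))
  / (5%:R * (mu ^+ 2 + nu ^+ 2)).

(* Expanding the determinant gives [det M = s^2 (3 |a|^2 + 8 (a.b) s + 5 |b|^2 s^2)]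
   with [s = |psi|^2 > 0].  The quadratic factor has nonnegative coefficients when
   [a.b >= 0] (and is then positive since [a] or [b] is nonzero).  When [a.b < 0]
   both [a] and [b] are nonzero; the quadratic is positive everywhere if its
   discriminant is negative, and otherwise its smaller root [r_-] is positive, so
   hypothesis (3) puts [s] strictly below it, where the quadratic is positive. *)
From HB Require Import structures.
From mathcomp Require Import all_boot all_order all_algebra.
From mathcomp Require Import reals.
From mathcomp Require Import ring lra.
Import Order.TTheory GRing.Theory Num.Theory.
Local Open Scope ring_scope.

Lemma det_mx22 (R : comNzRingType) (A : 'M[R]_2) :
  \det A = A 0 0 * A 1 1 - A 0 1 * A 1 0.
Proof.
rewrite (expand_det_row _ 0) !big_ord_recl big_ord0 /cofactor !det_mx11 !mxE /=.
have lift01 : lift 0 (0 : 'I_1) = 1 :> 'I_2 by apply/val_inj.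
have lift10 : lift 1 (0 : 'I_1) = 0 :> 'I_2 by apply/val_inj.
by rewrite !lift01 lift10 /bump /= expr0 expr1 mul1r mulN1r mulrN addr0.
Qed.

Lemma sum_ord2 (R : nmodType) (F : 'I_2 -> R) : \sum_(i < 2) F i = F 0 + F 1.
Proof.
rewrite big_ord_recl big_ord1.
by congr (_ + F _); apply/val_inj.
Qed.

Lemma norm2_sqr (R : realType) (v : 'cV[R]_2) :
  norm2 v ^+ 2 = v 0 0 ^+ 2 + v 1 0 ^+ 2.
Proof. by rewrite sqr_sqrtr sum_ord2 // addr_ge0 ?sqr_ge0. Qed.

Lemma det_Mmat (R : realType) (eps gam mu nu : R) (psi : R -> 'cV[R]_2) (x : R) :
  let s := norm2 (psi x) ^+ 2 in
  \det (Mmat eps gam mu nu psi x) =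
  s ^+ 2 * (3%:R * (eps ^+ 2 + gam ^+ 2) + 8%:R * (eps * mu + gam * nu) * s
            + 5%:R * (mu ^+ 2 + nu ^+ 2) * s ^+ 2).
Proof.
have ord0E : ord0 = 0 :> 'I_1 by apply/val_inj.
rewrite /= /Mmat (exprM _ 2 2) norm2_sqr det_mx22 /N1 /N2 /mat2.
rewrite !mxE !sum_ord2 !mxE !big_ord1 !mxE !ord0E /=.
ring.
Qed.

(* Quadratics written as [a x^2 + 2 b x + c], with reduced discriminant [b^2 - a c]:
   [disc] and [r_minus] are the reduced discriminant and the smaller root of the
   quadratic factor in [det_Mmat]. *)
Section ReducedQuadratic.

Variables (R : rcfType) (a b c : R).
Hypothesis a_gt0 : 0 < a.

Local Notation delta := (b ^+ 2 - a * c).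

Lemma deg2_reduced_canonical x :
  a * (a * x ^+ 2 + 2 * b * x + c) = (a * x + b) ^+ 2 - delta.
Proof. by ring. Qed.

Lemma deg2_reduced_gt0 x : delta < 0 -> 0 < a * x ^+ 2 + 2 * b * x + c.
Proof.
move=> delta_lt0; rewrite -(pmulr_rgt0 _ a_gt0) deg2_reduced_canonical.
by rewrite subr_gt0 (lt_le_trans delta_lt0) ?sqr_ge0.
Qed.

Lemma deg2_reduced_gt0l x :
  x < (- b - Num.sqrt delta) / a -> 0 < a * x ^+ 2 + 2 * b * x + c.
Proof.
have [/deg2_reduced_gt0 //|delta_ge0] := ltP delta 0.
rewrite ltr_pdivlMr // => x_lt_root.
have sqrt_lt : Num.sqrt delta < - (a * x + b) by lra.
rewrite -(pmulr_rgt0 _ a_gt0) deg2_reduced_canonical subr_gt0.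
by rewrite -(sqrrN (a * x + b)) -(sqr_sqrtr delta_ge0) ltrXn2r // sqrtr_ge0.
Qed.

Lemma deg2_reduced_root_gt0 : 0 < c -> b < 0 -> 0 < (- b - Num.sqrt delta) / a.
Proof.
move=> c_gt0 b_lt0; rewrite divr_gt0 // subr_gt0.
rewrite -[- b]ltr0_norm // -sqrtr_sqr ltr_sqrt ?exprn_even_gt0 ?ltr0_neq0 ?orbT //.
by rewrite gtrBl mulr_gt0.
Qed.

End ReducedQuadratic.

Lemma deg2_nneg_coef_gt0 (R : realDomainType) (a b c x : R) :
  0 < x -> 0 <= a -> 0 <= b -> 0 <= c -> 0 < a + c ->
  0 < a * x ^+ 2 + 2 * b * x + c.
Proof.
move=> x_gt0 a_ge0 b_ge0 c_ge0 ac_gt0.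
have x2_gt0 : 0 < x ^+ 2 by rewrite exprn_gt0.
have bx_ge0 : 0 <= b * x by rewrite mulr_ge0 // ltW.
have [c_gt0 | c_le0] := ltP 0 c.
  by have := mulr_ge0 a_ge0 (ltW x2_gt0); lra.
have a_gt0 : 0 < a by lra.
by have := mulr_gt0 a_gt0 x2_gt0; lra.
Qed.

Lemma vec2_eq0 (R : nzRingType) (x y : R) :
  (vec2 x y == 0) = (x == 0) && (y == 0).
Proof.
apply/eqP/andP => [/matrixP v0 | [/eqP-> /eqP->]].
  by have := v0 0 0; have := v0 1 0; rewrite !mxE /= => -> ->.
by apply/matrixP => i j; rewrite !mxE; case: ifP.
Qed.

Lemma vec2_neq0E (R : realDomainType) (x y : R) :
  (vec2 x y != 0) = (0 < x ^+ 2 + y ^+ 2).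
Proof.
by rewrite lt_def paddr_eq0 ?sqr_ge0 // !sqrf_eq0 vec2_eq0 addr_ge0 ?sqr_ge0 ?andbT.
Qed.

Theorem proposition7p7 (R : realType) (eps gam mu nu : R) (psi : R -> 'cV[R]_2)
  (H1 : forall x : R, 0 < norm2 (psi x))
  (H2 : vec2 eps gam != 0 \/ vec2 mu nu != 0)
  (H3 : vec2 eps gam != 0 -> vec2 mu nu != 0 ->
        0 <= disc eps gam mu nu -> 0 < r_minus eps gam mu nu ->
        exists2 x0 : R, (forall x : R, norm2 (psi x) ^+ 2 <= norm2 (psi x0) ^+ 2)
                      & norm2 (psi x0) ^+ 2 < r_minus eps gam mu nu) :
  forall x : R, 0 < \det (Mmat eps gam mu nu psi x).
Proof.
move=> x; rewrite det_Mmat mulr_gt0 ?exprn_gt0 //.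
set s := norm2 (psi x) ^+ 2; have s_gt0 : 0 < s by rewrite exprn_gt0.
set A := eps ^+ 2 + gam ^+ 2; set B := mu ^+ 2 + nu ^+ 2.
set c := eps * mu + gam * nu.
have -> : 3 * A + 8 * c * s + 5 * B * s ^+ 2 = 5 * B * s ^+ 2 + 2 * (4 * c) * s + 3 * A.
  by ring.
have [c_ge0 | c_lt0] := leP 0 c.
  have [A_ge0 B_ge0] : 0 <= A /\ 0 <= B by rewrite !addr_ge0 ?sqr_ge0.
  apply: deg2_nneg_coef_gt0; rewrite ?mulr_ge0 //.
  have [A_gt0 | B_gt0] : 0 < A \/ 0 < B by rewrite -!vec2_neq0E.
    by rewrite ltr_pwDr ?mulr_ge0 ?mulr_gt0.
  by rewrite ltr_pwDl ?mulr_ge0 ?mulr_gt0.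
have [a_neq0 b_neq0] : vec2 eps gam != 0 /\ vec2 mu nu != 0.
  rewrite !vec2_eq0; split; apply: contraTN c_lt0; rewrite /c.
    by move=> /andP[/eqP-> /eqP->]; rewrite !mul0r addr0 ltxx.
  by move=> /andP[/eqP-> /eqP->]; rewrite !mulr0 addr0 ltxx.
have A3_gt0 : 0 < 3 * A by rewrite mulr_gt0 // -vec2_neq0E.
have B5_gt0 : 0 < 5 * B by rewrite mulr_gt0 // -vec2_neq0E.
have discE : disc eps gam mu nu = (4 * c) ^+ 2 - 5 * B * (3 * A).
  by rewrite /disc -/A -/B -/c; ring.
have [disc_lt0 | disc_ge0] := ltP (disc eps gam mu nu) 0.
  by apply: deg2_reduced_gt0; rewrite -?discE.
have root_gt0 : 0 < r_minus eps gam mu nu.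
  by rewrite /r_minus discE deg2_reduced_root_gt0 // pmulr_rlt0.
have [x0 s_le_max max_lt_root] := H3 a_neq0 b_neq0 disc_ge0 root_gt0.
apply: deg2_reduced_gt0l => //.
by rewrite -discE; apply: le_lt_trans (s_le_max x) max_lt_root.
Qed.
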